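(* For $k\ge4$ and $d\in[(2^{k-1}-2)k\log2,\;2^{k-1}k\log2]$ if $k\ge5$, resp. $d\in[16.7,\;32\log2]$ if $k=4$, the equation $\Psi_d(x)=x$ has a unique solution in $[\frac12-\frac1{2^k},\frac12]$.
   Context: $\hat\Psi(x)=\frac{1-2x^{k-1}}{1-x^{k-1}}$, $\dot\Psi(v)=\frac{1-v^{d-1}}{2-v^{d-1}}$, $\Psi_d=\dot\Psi\circ\hat\Psi$ ($d$ real). *)

From Stdlib Require Import Reals.
Open Scope R_scope.

Definition PsiHat (k : nat) (x : R) : R :=
  (1 - 2 * x ^ (k - 1)) / (1 - x ^ (k - 1)).

(* \dot\Psi(v) = (1 - v^{d-1}) / (2 - v^{d-1}), real exponent d-1
   (v^{d-1} := Rpower v (d-1) = exp((d-1) ln v), meaningful for v > 0). *)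
Definition PsiDot (d : R) (v : R) : R :=
  (1 - Rpower v (d - 1)) / (2 - Rpower v (d - 1)).

Definition Psi (k : nat) (d : R) (x : R) : R := PsiDot d (PsiHat k x).

From Stdlib Require Import Reals Lra Lia Ranalysis5.
From Coquelicot Require Import Coquelicot.
Open Scope R_scope.

(* Write n = k - 1, e = 2^-n and ell m t = ln ((1 - 2 t^m) / (1 - t^m)), so that
   ln (PsiHat k t) = ell n t.  The map w |-> (1 - w) / (2 - w) is the decreasing
   inverse of t |-> (1 - 2t) / (1 - t) = exp (ell 1 t); hence Psi_d(x) - x has the
   sign of ell 1 x - (d - 1) ell n x, and Psi_d(1/2) < 1/2.  The lower bound on d
   gives (d - 1) ell n a <= ell 1 a at a = (1 - e)/2 (by Bernoulli's inequality for
   k >= 5, by an exact rational computation for k = 4), so a fixed point exists by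
   the intermediate value theorem.  A fixed point x < 1/2 satisfies
   ell 1 x / ell n x = d - 1, and this ratio is strictly increasing on [a, 1/2)
   because its Wronskian ell 1' ell n - ell 1 ell n' is positive there; the key
   estimate is s ln ((1 + s) / 2s) <= e ln ((1 + e) / 2e) for s = 1 - 2t <= e. *)

Lemma ln_le_sub_1 x : 0 < x -> ln x <= x - 1.
Proof. intros Hx. pose proof (exp_ineq1_le (ln x)). rewrite exp_ln in H; lra. Qed.

Lemma ln2_le : ln 2 <= 7 / 10.
Proof.
rewrite <- (ln_exp (7 / 10)). apply ln_le; [lra|].
eapply Rle_trans; [|apply (exp_ge_taylor _ 3); lra].
simpl. lra.
Qed.

Lemma bernoulli_ineq a n : -1 <= a -> 1 + INR n * a <= (1 + a) ^ n.
Proof.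
intros Ha. induction n as [|n IH]; [simpl; lra|].
rewrite S_INR, <- tech_pow_Rmult. pose proof (pos_INR n).
assert ((1 + a) * (1 + INR n * a) <= (1 + a) * (1 + a) ^ n)
  by (apply Rmult_le_compat_l; lra).
nra.
Qed.

Lemma le_geometric (f : nat -> R) (q c : R) (n0 : nat) :
  0 <= q -> (forall n, (n0 <= n)%nat -> f (S n) <= q * f n) ->
  f n0 <= c * q ^ n0 -> forall n, (n0 <= n)%nat -> f n <= c * q ^ n.
Proof.
intros Hq Hstep H0 n Hn. induction Hn as [|n Hn IH]; [exact H0|].
simpl. specialize (Hstep n Hn). nra.
Qed.

Lemma pow_ratio_le_IZR (p q r s : Z) (m j : nat) : (0 < q)%Z -> (0 < s)%Z ->
  (p ^ Z.of_nat m * s ^ Z.of_nat j <= r ^ Z.of_nat j * q ^ Z.of_nat m)%Z ->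
  (IZR p / IZR q) ^ m <= (IZR r / IZR s) ^ j.
Proof.
intros Hq Hs H.
assert (Hqm : 0 < IZR q ^ m) by (apply pow_lt, IZR_lt; lia).
assert (Hsj : 0 < IZR s ^ j) by (apply pow_lt, IZR_lt; lia).
apply IZR_le in H. rewrite !mult_IZR, <- !pow_IZR in H.
unfold Rdiv. rewrite !Rpow_mult_distr, !pow_inv.
apply Rmult_le_reg_r with (IZR q ^ m * IZR s ^ j); [nra|].
replace (IZR p ^ m * / IZR q ^ m * (IZR q ^ m * IZR s ^ j))
  with (IZR p ^ m * IZR s ^ j) by (field; lra).
replace (IZR r ^ j * / IZR s ^ j * (IZR q ^ m * IZR s ^ j))
  with (IZR r ^ j * IZR q ^ m) by (field; lra).
exact H.
Qed.

Lemma pow_le_inv_pow2 n t : 0 <= t <= 1 / 2 -> t ^ n <= / 2 ^ n.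
Proof. intros Ht. rewrite <- pow_inv. apply pow_incr. lra. Qed.

Lemma inv_pow2_le m n : (m <= n)%nat -> / 2 ^ n <= / 2 ^ m.
Proof.
intros Hmn. apply Rinv_le_contravar; [apply pow_lt; lra|].
apply Rle_pow; [lra | exact Hmn].
Qed.

Lemma two_pow_lt_1 n t : (2 <= n)%nat -> 0 <= t <= 1 / 2 -> 2 * t ^ n < 1.
Proof.
intros Hn Ht. pose proof (pow_le_inv_pow2 n t Ht).
pose proof (inv_pow2_le 2 n Hn). simpl in *. lra.
Qed.

Lemma le_mul_inv_pow2 x c n : x <= c * 2 ^ n -> x * / 2 ^ n <= c.
Proof.
intros H. assert (0 < 2 ^ n) by (apply pow_lt; lra).
apply Rmult_le_reg_r with (2 ^ n); [lra|].
rewrite Rmult_assoc, Rinv_l; lra.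
Qed.

Lemma INR_mul_pred_le_pow2 n : (3 <= n)%nat -> INR n * (INR n - 1) <= 3 / 4 * 2 ^ n.
Proof.
apply (le_geometric (fun n => INR n * (INR n - 1))); [lra| |simpl; lra].
intros m Hm. rewrite S_INR. assert (3 <= INR m) by (apply le_INR in Hm; simpl in Hm; lra). nra.
Qed.

Lemma INR_succ_mul_le_pow2 n : (5 <= n)%nat -> (INR n + 1) * (INR n + 2) <= 21 / 16 * 2 ^ n.
Proof.
apply (le_geometric (fun n => (INR n + 1) * (INR n + 2))); [lra| |simpl; lra].
intros m Hm. rewrite S_INR. assert (5 <= INR m) by (apply le_INR in Hm; simpl in Hm; lra). nra.
Qed.

Lemma pow_one_sub_inv_pow2_half_ge n :
  / 2 ^ n * (1 - INR n * / 2 ^ n) <= ((1 - / 2 ^ n) / 2) ^ n.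
Proof.
assert (He : 0 < / 2 ^ n) by (apply Rinv_0_lt_compat, pow_lt; lra).
pose proof (inv_pow2_le 0 n ltac:(lia)) as He1. simpl in He1.
unfold Rdiv. rewrite Rpow_mult_distr, pow_inv.
pose proof (bernoulli_ineq (- / 2 ^ n) n ltac:(lra)).
replace (1 - / 2 ^ n) with (1 + - / 2 ^ n) by ring.
rewrite (Rmult_comm (/ 2 ^ n)). apply Rmult_le_compat_r; lra.
Qed.

Lemma mul_ln_ratio_le s e : 0 < s <= e -> 1 <= ln ((1 + e) / (2 * e)) ->
  s * ln ((1 + s) / (2 * s)) <= e * ln ((1 + e) / (2 * e)).
Proof.
intros Hs HM. set (M := ln ((1 + e) / (2 * e))) in *.
assert (Hle : ln ((1 + s) / (2 * s)) <= M + ln (e / s)).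
{ unfold M. rewrite <- ln_mult by (apply Rdiv_lt_0_compat; lra).
  apply ln_le; [apply Rdiv_lt_0_compat; lra|].
  apply Rmult_le_reg_r with (2 * s); [lra|].
  replace ((1 + e) / (2 * e) * (e / s) * (2 * s)) with (1 + e) by (field; lra).
  replace ((1 + s) / (2 * s) * (2 * s)) with (1 + s) by (field; lra). lra. }
assert (Hes : s * ln (e / s) <= e - s).
{ pose proof (ln_le_sub_1 (e / s) ltac:(apply Rdiv_lt_0_compat; lra)) as H.
  apply Rmult_le_compat_l with (r := s) in H; [|lra].
  replace (s * (e / s - 1)) with (e - s) in H by (field; lra). exact H. }
assert (s * ln ((1 + s) / (2 * s)) <= s * M + (e - s))
  by (apply Rmult_le_compat_l with (r := s) in Hle; lra).
nra.
Qed.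

Lemma ln_ratio_pow2 n :
  ln ((1 + / 2 ^ n) / (2 * / 2 ^ n)) = ln (1 + / 2 ^ n) + (INR n - 1) * ln 2.
Proof.
assert (H2n : 0 < 2 ^ n) by (apply pow_lt; lra).
assert (0 < / 2 ^ n) by (apply Rinv_0_lt_compat; lra).
replace ((1 + / 2 ^ n) / (2 * / 2 ^ n)) with ((1 + / 2 ^ n) * (2 ^ n / 2)) by (field; lra).
rewrite ln_mult, ln_div, ln_pow by lra. ring.
Qed.

Lemma ln_ratio_pow2_bounds n : (3 <= n)%nat ->
  1 <= ln ((1 + / 2 ^ n) / (2 * / 2 ^ n)) <= / 2 ^ n + (INR n - 1) * ln 2.
Proof.
intros Hn. rewrite ln_ratio_pow2.
assert (He : 0 < / 2 ^ n) by (apply Rinv_0_lt_compat, pow_lt; lra).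
pose proof (ln_le_sub_1 (1 + / 2 ^ n) ltac:(lra)).
assert (0 <= ln (1 + / 2 ^ n)) by (rewrite <- ln_1; apply ln_le; lra).
assert (3 <= INR n) by (apply le_INR in Hn; simpl in Hn; lra).
pose proof ln_lt_2. nra.
Qed.

Lemma mul_ln_ratio_le_pow2 n s : (3 <= n)%nat -> 0 < s <= / 2 ^ n ->
  s * ln ((1 + s) / (2 * s)) <= / 2 ^ n * (/ 2 ^ n + (INR n - 1) * ln 2).
Proof.
intros Hn Hs. pose proof (ln_ratio_pow2_bounds n Hn) as [HM1 HM2].
apply Rle_trans with (1 := mul_ln_ratio_le s (/ 2 ^ n) Hs HM1).
apply Rmult_le_compat_l; lra.
Qed.

Definition ell (m : nat) (t : R) : R := ln ((1 - 2 * t ^ m) / (1 - t ^ m)).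

Definition dell (m : nat) (t : R) : R :=
  - (INR m * t ^ pred m) / ((1 - 2 * t ^ m) * (1 - t ^ m)).

Lemma ell_1 x : ell 1 x = ln ((1 - 2 * x) / (1 - x)).
Proof. unfold ell. now rewrite pow_1. Qed.

Lemma ell_le m t : 0 < t ^ m -> 2 * t ^ m < 1 -> ell m t <= - (t ^ m / (1 - t ^ m)).
Proof.
intros Hu Hu2. unfold ell.
eapply Rle_trans; [apply ln_le_sub_1, Rdiv_lt_0_compat; lra|].
apply Req_le. field. lra.
Qed.

Lemma ell_neg m t : 0 < t ^ m -> 2 * t ^ m < 1 -> ell m t < 0.
Proof.
intros Hu Hu2. pose proof (ell_le m t Hu Hu2).
assert (0 < t ^ m / (1 - t ^ m)) by (apply Rdiv_lt_0_compat; lra). lra.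
Qed.

Lemma ell_1_neg_ln t : t < 1 / 2 -> ell 1 t = - ln ((1 + (1 - 2 * t)) / (2 * (1 - 2 * t))).
Proof.
intros Ht. rewrite ell_1, <- ln_Rinv by (apply Rdiv_lt_0_compat; lra).
f_equal. field. lra.
Qed.

Lemma is_derive_ell m t : 0 < t -> 2 * t ^ m < 1 -> is_derive (ell m) t (dell m t).
Proof.
intros Ht Hu2. assert (Hu : 0 < t ^ m) by (apply pow_lt; lra).
unfold ell, dell. auto_derive.
- repeat split; try lra. apply Rdiv_lt_0_compat; lra.
- field. lra.
Qed.

Lemma exp_mul_ell_lt_1 n d x : 1 < d -> 0 < x -> 2 * x ^ n < 1 ->
  exp ((d - 1) * ell n x) < 1.
Proof.
intros Hd Hx Hu2. assert (Hu : 0 < x ^ n) by (apply pow_lt; lra).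
pose proof (ell_neg n x Hu Hu2).
assert (0 < (d - 1) * - ell n x) by (apply Rmult_lt_0_compat; lra).
rewrite <- exp_0 at 2. apply exp_increasing. lra.
Qed.

Lemma PsiHat_S n x : PsiHat (S n) x = (1 - 2 * x ^ n) / (1 - x ^ n).
Proof. unfold PsiHat. now rewrite Nat.sub_succ, Nat.sub_0_r. Qed.

Lemma Psi_sub_id n d x : 1 < d -> 0 < x < 1 -> 2 * x ^ n < 1 ->
  Psi (S n) d x - x =
  (1 - x) * ((1 - 2 * x) / (1 - x) - exp ((d - 1) * ell n x))
  / (2 - exp ((d - 1) * ell n x)).
Proof.
intros Hd Hx Hu2. pose proof (exp_mul_ell_lt_1 n d x Hd ltac:(lra) Hu2).
unfold Psi, PsiDot, Rpower. rewrite PsiHat_S. fold (ell n x).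
field. lra.
Qed.

Lemma Psi_half_lt_half n d : (2 <= n)%nat -> 1 < d -> Psi (S n) d (1 / 2) < 1 / 2.
Proof.
intros Hn Hd.
assert (Hu2 := two_pow_lt_1 n (1 / 2) Hn ltac:(lra)).
pose proof (exp_pos ((d - 1) * ell n (1 / 2))).
pose proof (exp_mul_ell_lt_1 n d (1 / 2) Hd ltac:(lra) Hu2).
pose proof (Psi_sub_id n d (1 / 2) Hd ltac:(lra) Hu2) as E.
replace ((1 - 2 * (1 / 2)) / (1 - 1 / 2)) with 0 in E by field.
assert (0 < (1 - 1 / 2) * exp ((d - 1) * ell n (1 / 2))
            / (2 - exp ((d - 1) * ell n (1 / 2))))
  by (apply Rdiv_lt_0_compat; nra).
lra.
Qed.

Lemma ell_eq_of_Psi_fixed n d x : 1 < d -> 0 < x < 1 / 2 -> 2 * x ^ n < 1 ->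
  Psi (S n) d x = x -> ell 1 x = (d - 1) * ell n x.
Proof.
intros Hd Hx Hu2 Hfix.
pose proof (exp_mul_ell_lt_1 n d x Hd ltac:(lra) Hu2).
assert (Hw : exp ((d - 1) * ell n x) = (1 - 2 * x) / (1 - x)).
{ assert (E := Psi_sub_id n d x Hd ltac:(lra) Hu2).
  rewrite Hfix, Rminus_diag in E.
  assert (((1 - 2 * x) / (1 - x) - exp ((d - 1) * ell n x))
          = 0 * (2 - exp ((d - 1) * ell n x)) / (1 - x)) as E'
    by (rewrite E; field; lra).
  lra. }
rewrite ell_1, <- Hw. apply ln_exp.
Qed.

Lemma le_Psi n d x : 1 < d -> 0 < x < 1 / 2 -> 2 * x ^ n < 1 ->
  (d - 1) * ell n x <= ell 1 x -> x <= Psi (S n) d x.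
Proof.
intros Hd Hx Hu2 Hle.
pose proof (exp_mul_ell_lt_1 n d x Hd ltac:(lra) Hu2).
assert (Hw : exp ((d - 1) * ell n x) <= (1 - 2 * x) / (1 - x)).
{ rewrite <- (exp_ln ((1 - 2 * x) / (1 - x))) by (apply Rdiv_lt_0_compat; lra).
  rewrite <- ell_1. destruct Hle as [Hlt | ->]; [left; apply exp_increasing, Hlt | lra]. }
assert (0 <= (1 - x) * ((1 - 2 * x) / (1 - x) - exp ((d - 1) * ell n x))
             / (2 - exp ((d - 1) * ell n x))).
{ apply Rmult_le_pos; [apply Rmult_le_pos; lra|].
  left. apply Rinv_0_lt_compat. lra. }
rewrite <- (Psi_sub_id n d x Hd ltac:(lra) Hu2) in H0. lra.
Qed.

Lemma Psi_continuity_pt n d t : 1 < d -> 0 < t < 1 -> 2 * t ^ n < 1 ->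
  continuity_pt (Psi (S n) d) t.
Proof.
intros Hd Ht Hu2. assert (Hu : 0 < t ^ n) by (apply pow_lt; lra).
pose proof (exp_mul_ell_lt_1 n d t Hd ltac:(lra) Hu2) as Hw. unfold ell in Hw.
apply derivable_continuous_pt, ex_derive_Reals_0.
unfold Psi, PsiDot, PsiHat, Rpower. rewrite Nat.sub_succ, Nat.sub_0_r.
unfold Rminus, Rdiv in *.
assert (0 < (1 + - (2 * t ^ n)) * / (1 + - t ^ n))
  by (apply Rmult_lt_0_compat; [lra | apply Rinv_0_lt_compat; lra]).
auto_derive. repeat split; lra.
Qed.

Lemma Psi_fixed_point_exists n d a : (2 <= n)%nat -> 1 < d -> 0 < a < 1 / 2 ->
  (d - 1) * ell n a <= ell 1 a -> exists x, a <= x <= 1 / 2 /\ Psi (S n) d x = x.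
Proof.
intros Hn Hd Ha Hle.
set (F t := t - Psi (S n) d t).
assert (Fa : F a <= 0)
  by (unfold F; pose proof (le_Psi n d a Hd Ha (two_pow_lt_1 n a Hn ltac:(lra)) Hle); lra).
assert (Fhalf : 0 < F (1 / 2)) by (unfold F; pose proof (Psi_half_lt_half n d Hn Hd); lra).
destruct Fa as [Fa | Fa].
- assert (Fcont : forall t, a <= t <= 1 / 2 -> continuity_pt F t).
  { intros t Ht. apply continuity_pt_minus; [apply continuity_pt_id|].
    apply Psi_continuity_pt; [exact Hd | lra | apply two_pow_lt_1; [exact Hn | lra]]. }
  destruct (IVT_interv F a (1 / 2) Fcont ltac:(lra) Fa Fhalf) as [x [Hx Fx]].
  exists x. split; [exact Hx|]. unfold F in Fx. lra.
- exists a. split; [lra|]. unfold F in Fa. lra.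
Qed.

Lemma wronskian_estimate n t : (3 <= n)%nat -> (1 - / 2 ^ n) / 2 <= t < 1 / 2 ->
  INR n * (1 - t) * (/ 2 ^ n * (/ 2 ^ n + (INR n - 1) * ln 2)) < t * (1 - 2 * t ^ n).
Proof.
intros Hn Ht.
pose proof (inv_pow2_le 3 n Hn) as He8. simpl in He8.
pose proof (le_mul_inv_pow2 _ _ _ (INR_mul_pred_le_pow2 n Hn)) as Hnn.
pose proof (pow_le_inv_pow2 n t ltac:(lra)) as Hu.
assert (Hn3 : 3 <= INR n) by (apply le_INR in Hn; simpl in Hn; lra).
pose proof ln2_le. pose proof ln_lt_2.
set (e := / 2 ^ n) in *. set (N := INR n) in *.
assert (Hne : N * e <= 3 / 8) by nra.
assert (HK : N * (e * (e + (N - 1) * ln 2)) <= 3 / 8 * e + 3 / 4 * (7 / 10)) by nra.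
assert (0 <= N * (e * (e + (N - 1) * ln 2)))
  by (apply Rmult_le_pos; [lra | apply Rmult_le_pos; [lra | nra]]).
assert (t * (1 - 2 * t ^ n) >= (1 - e) / 2 * (1 - 2 * e)) by nra.
nra.
Qed.

Lemma ell_wronskian_pos n t : (3 <= n)%nat -> (1 - / 2 ^ n) / 2 <= t < 1 / 2 ->
  0 < dell 1 t * ell n t - ell 1 t * dell n t.
Proof.
intros Hn Ht.
pose proof (inv_pow2_le 3 n Hn) as He8. simpl in He8.
pose proof (wronskian_estimate n t Hn Ht) as Hkey.
pose proof (pow_le_inv_pow2 n t ltac:(lra)) as Hue.
assert (Hu : 0 < t ^ n) by (apply pow_lt; lra).
assert (Hp : 0 < t ^ pred n) by (apply pow_lt; lra).
assert (Htp : t ^ n = t * t ^ pred n) by (destruct n; [lia | reflexivity]).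
assert (HB := ell_le n t Hu ltac:(lra)).
rewrite (ell_1_neg_ln t) by lra.
assert (HsL := mul_ln_ratio_le_pow2 n (1 - 2 * t) Hn ltac:(lra)).
set (s := 1 - 2 * t) in *. set (e := / 2 ^ n) in *.
set (L := ln ((1 + s) / (2 * s))) in *.
set (u := t ^ n) in *. set (p := t ^ pred n) in *. set (B := ell n t) in *.
assert (HN : 0 <= INR n) by apply pos_INR.
assert (HD : 0 < s * (1 - t) * (1 - 2 * u) * (1 - u))
  by (repeat apply Rmult_lt_0_compat; unfold s; lra).
assert (E : (dell 1 t * B - - L * dell n t) * (s * (1 - t) * (1 - 2 * u) * (1 - u))
            = - B * (1 - 2 * u) * (1 - u) - L * INR n * p * s * (1 - t)).
{ unfold dell, s. fold u p. simpl. field. unfold u in *. repeat split; lra. }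
assert (- B * (1 - 2 * u) * (1 - u) >= u * (1 - 2 * u)).
{ assert (u / (1 - u) * ((1 - 2 * u) * (1 - u)) = u * (1 - 2 * u)) by (field; lra).
  assert (0 < (1 - 2 * u) * (1 - u)) by (apply Rmult_lt_0_compat; lra).
  nra. }
assert (L * INR n * p * s * (1 - t) <= INR n * p * (1 - t) * (e * (e + (INR n - 1) * ln 2))).
{ replace (L * INR n * p * s * (1 - t)) with ((s * L) * (INR n * p * (1 - t))) by ring.
  rewrite (Rmult_comm (INR n * p * (1 - t))).
  apply Rmult_le_compat_r; [|exact HsL].
  apply Rmult_le_pos; [apply Rmult_le_pos|]; lra. }
assert (INR n * p * (1 - t) * (e * (e + (INR n - 1) * ln 2)) < u * (1 - 2 * u)).
{ rewrite Htp. nra. }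
nra.
Qed.

Lemma ell_ratio_increasing n x y : (3 <= n)%nat ->
  (1 - / 2 ^ n) / 2 <= x -> x < y -> y < 1 / 2 ->
  ell 1 x / ell n x < ell 1 y / ell n y.
Proof.
intros Hn Hx Hxy Hy.
pose proof (inv_pow2_le 3 n Hn) as He8. simpl in He8.
assert (Hell : forall t, (1 - / 2 ^ n) / 2 <= t <= y -> 0 < t /\ 2 * t ^ 1 < 1 /\ 2 * t ^ n < 1
                                                       /\ ell n t < 0).
{ intros t Ht. pose proof (two_pow_lt_1 n t ltac:(lia) ltac:(lra)).
  repeat split; [lra | simpl; lra | exact H |].
  apply ell_neg; [apply pow_lt |]; lra. }
apply (incr_function_le (fun t => ell 1 t / ell n t) ((1 - / 2 ^ n) / 2) y
         (fun t => (dell 1 t * ell n t - ell 1 t * dell n t) / ell n t ^ 2));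
  [| | simpl; lra ..]; intros z Hz1 Hz2; simpl in Hz1, Hz2;
  destruct (Hell z (conj Hz1 Hz2)) as (Hz & H1 & Hn' & Hneg).
- apply is_derive_div; [apply is_derive_ell; lra .. | lra].
- apply Rdiv_lt_0_compat; [apply ell_wronskian_pos; [exact Hn | lra] | nra].
Qed.

Lemma Psi_fixed_point_unique n d x y : (3 <= n)%nat -> 1 < d ->
  (1 - / 2 ^ n) / 2 <= x <= 1 / 2 -> (1 - / 2 ^ n) / 2 <= y <= 1 / 2 ->
  Psi (S n) d x = x -> Psi (S n) d y = y -> x = y.
Proof.
intros Hn Hd Hx Hy Px Py.
pose proof (inv_pow2_le 3 n Hn) as He8. simpl in He8.
assert (Hratio : forall z, (1 - / 2 ^ n) / 2 <= z <= 1 / 2 -> Psi (S n) d z = z ->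
                   z < 1 / 2 /\ ell 1 z / ell n z = d - 1).
{ intros z Hz Pz.
  assert (Hz2 : z < 1 / 2).
  { destruct (Rlt_or_le z (1 / 2)) as [Hlt | Hge]; [exact Hlt|].
    replace z with (1 / 2) in Pz by lra.
    pose proof (Psi_half_lt_half n d ltac:(lia) Hd). lra. }
  assert (Hu2 := two_pow_lt_1 n z ltac:(lia) ltac:(lra)).
  pose proof (ell_neg n z ltac:(apply pow_lt; lra) Hu2).
  split; [exact Hz2|].
  rewrite (ell_eq_of_Psi_fixed n d z Hd ltac:(lra) Hu2 Pz). field. lra. }
destruct (Hratio x Hx Px) as [Hx2 Rx], (Hratio y Hy Py) as [Hy2 Ry].
destruct (Rtotal_order x y) as [Hlt | [Heq | Hgt]]; [exfalso | exact Heq | exfalso].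
- pose proof (ell_ratio_increasing n x y Hn ltac:(lra) Hlt Hy2). lra.
- pose proof (ell_ratio_increasing n y x Hn ltac:(lra) Hgt Hx2). lra.
Qed.

Lemma boundary_estimate n : (4 <= n)%nat ->
  / 2 ^ n + (INR n - 1) * ln 2
  <= ((INR n + 1) * ln 2 * (1 - 2 * / 2 ^ n) - / 2 ^ n) * (1 - INR n * / 2 ^ n).
Proof.
intros Hn. pose proof ln_lt_2.
destruct (Nat.eq_dec n 4) as [-> | Hn4].
- simpl. lra.
- assert (Hn5 : (5 <= n)%nat) by lia.
  pose proof (le_mul_inv_pow2 _ _ _ (INR_succ_mul_le_pow2 n Hn5)) as Hq.
  assert (He : 0 < / 2 ^ n) by (apply Rinv_0_lt_compat, pow_lt; lra).
  assert (5 <= INR n) by (apply le_INR in Hn5; simpl in Hn5; lra).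
  set (e := / 2 ^ n) in *. set (N := INR n) in *.
  assert (0 <= N * e) by nra.
  assert (0 <= e * e * N * (N + 1) * ln 2) by (repeat apply Rmult_le_pos; lra).
  assert (((N + 1) * ln 2 * (1 - 2 * e) - e) * (1 - N * e)
          >= (N + 1) * ln 2 - ((N + 1) * (N + 2) * e) * ln 2 - e) by nra.
  nra.
Qed.

Lemma one_lt_boundary_bound n : (4 <= n)%nat -> 1 < (2 ^ n - 2) * (INR n + 1) * ln 2.
Proof.
intros Hn. pose proof (Rle_pow 2 4 n ltac:(lra) Hn) as H16. simpl in H16.
apply le_INR in Hn. simpl in Hn. pose proof ln_lt_2.
assert (70 <= (2 ^ n - 2) * (INR n + 1)) by nra. nra.
Qed.

Lemma ell_left_end_le n : (3 <= n)%nat ->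
  ell n ((1 - / 2 ^ n) / 2) <= - (/ 2 ^ n * (1 - INR n * / 2 ^ n)).
Proof.
intros Hn.
assert (He : 0 < / 2 ^ n) by (apply Rinv_0_lt_compat, pow_lt; lra).
pose proof (inv_pow2_le 3 n Hn) as He8. simpl in He8.
pose proof (pow_one_sub_inv_pow2_half_ge n) as Ha.
pose proof (pow_le_inv_pow2 n ((1 - / 2 ^ n) / 2) ltac:(lra)) as Hae.
pose proof (le_mul_inv_pow2 _ _ _ (INR_mul_pred_le_pow2 n Hn)) as Hnn.
assert (3 <= INR n) by (apply le_INR in Hn; simpl in Hn; lra).
set (a := (1 - / 2 ^ n) / 2) in *. set (e := / 2 ^ n) in *. set (N := INR n) in *.
assert (Hu : 0 < a ^ n) by nra.
pose proof (ell_le n a Hu ltac:(lra)).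
assert (a ^ n <= a ^ n / (1 - a ^ n)).
{ apply Rmult_le_reg_r with (1 - a ^ n); [lra|].
  unfold Rdiv. rewrite Rmult_assoc, Rinv_l; nra. }
lra.
Qed.

Lemma ell_boundary_ge4 n d : (4 <= n)%nat -> (2 ^ n - 2) * (INR n + 1) * ln 2 <= d ->
  (d - 1) * ell n ((1 - / 2 ^ n) / 2) <= ell 1 ((1 - / 2 ^ n) / 2).
Proof.
intros Hn Hd.
assert (H2n : 0 < 2 ^ n) by (apply pow_lt; lra).
assert (He : 0 < / 2 ^ n) by (apply Rinv_0_lt_compat; lra).
pose proof (boundary_estimate n Hn) as Hnum.
pose proof (one_lt_boundary_bound n Hn) as Hd1.
pose proof (ln_ratio_pow2_bounds n ltac:(lia)) as [_ HM].
pose proof (ell_left_end_le n ltac:(lia)) as HB.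
pose proof (le_mul_inv_pow2 _ _ _ (INR_mul_pred_le_pow2 n ltac:(lia))) as Hnn.
assert (4 <= INR n) by (apply le_INR in Hn; simpl in Hn; lra).
rewrite (ell_1_neg_ln _) by lra.
replace (1 - 2 * ((1 - / 2 ^ n) / 2)) with (/ 2 ^ n) by lra.
set (a := (1 - / 2 ^ n) / 2) in *. set (e := / 2 ^ n) in *. set (N := INR n) in *.
assert (Hne : N * e <= 3 / 8) by nra.
assert (Hde : (N + 1) * ln 2 * (1 - 2 * e) - e <= (d - 1) * e).
{ replace ((N + 1) * ln 2 * (1 - 2 * e) - e) with (((2 ^ n - 2) * (N + 1) * ln 2 - 1) * e)
    by (unfold e; field; lra).
  apply Rmult_le_compat_r; lra. }
assert ((d - 1) * ell n a <= (d - 1) * - (e * (1 - N * e)))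
  by (apply Rmult_le_compat_l; lra).
assert (((N + 1) * ln 2 * (1 - 2 * e) - e) * (1 - N * e) <= (d - 1) * e * (1 - N * e))
  by (apply Rmult_le_compat_r; lra).
lra.
Qed.

Lemma ell_boundary_3 d : 167 / 10 <= d ->
  (d - 1) * ell 3 ((1 - / 2 ^ 3) / 2) <= ell 1 ((1 - / 2 ^ 3) / 2).
Proof.
intros Hd.
replace ((1 - / 2 ^ 3) / 2) with (7 / 16) by (simpl; field).
assert (EB : ell 3 (7 / 16) = ln (IZR 3410 / IZR 3753)) by (unfold ell; f_equal; simpl; field).
assert (EA : ell 1 (7 / 16) = ln (IZR 2 / IZR 9)) by (rewrite ell_1; f_equal; field).
rewrite EA, EB.
set (q := IZR 3410 / IZR 3753).
assert (Hq : 0 < q < 1) by (unfold q; split; lra).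
assert (Hlq : ln q < 0) by (rewrite <- ln_1; apply ln_increasing; lra).
assert (K : q ^ 157 <= (IZR 2 / IZR 9) ^ 10)
  by (apply pow_ratio_le_IZR; [lia | lia | apply Z.leb_le; vm_compute; reflexivity]).
apply ln_le in K; [|apply pow_lt; lra].
rewrite !ln_pow in K by lra. simpl INR in K.
assert (0 <= (d - 1 - 157 / 10) * - ln q) by (apply Rmult_le_pos; lra).
lra.
Qed.

Theorem lemma3p1 (k : nat) (d : R) :
  (4 <= k)%nat ->
  (if (5 <=? k)%nat
   then (2 ^ (k - 1) - 2) * INR k * ln 2 <= d <= 2 ^ (k - 1) * INR k * ln 2
   else 16.7 <= d <= 32 * ln 2) ->
  exists! x : R, (1 / 2 - 1 / 2 ^ k <= x <= 1 / 2) /\ Psi k d x = x.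
Proof.
intros Hk Hd.
destruct k as [|n]; [lia|]. assert (Hn : (3 <= n)%nat) by lia.
assert (He : 0 < / 2 ^ n) by (apply Rinv_0_lt_compat, pow_lt; lra).
pose proof (inv_pow2_le 3 n Hn) as He8. simpl in He8.
replace (1 / 2 - 1 / 2 ^ S n) with ((1 - / 2 ^ n) / 2)
  by (simpl; field; apply pow_nonzero; lra).
assert (Hb : 1 < d /\ (d - 1) * ell n ((1 - / 2 ^ n) / 2) <= ell 1 ((1 - / 2 ^ n) / 2)).
{ destruct (5 <=? S n)%nat eqn:E.
  - apply Nat.leb_le in E. rewrite Nat.sub_succ, Nat.sub_0_r, S_INR in Hd.
    pose proof (one_lt_boundary_bound n ltac:(lia)).
    split; [|apply ell_boundary_ge4; [lia | lra]]; lra.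
  - apply Nat.leb_gt in E. replace n with 3%nat in * by lia.
    split; [|apply ell_boundary_3]; lra. }
destruct Hb as [Hd1 Hb].
destruct (Psi_fixed_point_exists n d ((1 - / 2 ^ n) / 2) ltac:(lia) Hd1 ltac:(lra) Hb)
  as [x [Hx Px]].
exists x. split; [split; assumption|].
intros y [Hy Py]. exact (Psi_fixed_point_unique n d x y Hn Hd1 Hx Hy Px Py).
Qed.
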